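(* Let $A=\{a_0,a_1,\dots,a_{k-1}\}\subseteq\mathcal{C}_n$ with $a_0<a_1<\dots<a_{k-1}$, and let $\sigma=\sigma^{(n)}_k(A)$ be the corresponding $k$-simplex. Then (a) $\mathcal{DN}^{\,n-a_0-1}_0=\sigma\cap\mathcal{E}^{(a_0)}_{\mathcal{C}_n}$; (b) $\mathcal{DN}^{\,a_{k-1}}_{k-1}=\sigma\cap\mathcal{E}^{(a_{k-1})}_{\mathcal{C}_n}$.
   Context: $\mathcal{C}_n=\{0,1,\dots,n-1\}$ is the chain with its usual order; $\widehat{\mathcal{E}}_{\mathcal{C}_n}$ is the set of all order-preserving maps $\mathcal{C}_n\to\mathcal{C}_n$ (not required to fix $0$), a semiring under pointwise maximum and composition. The $k$-simplex $\sigma^{(n)}_k(A)$ is the set of all $\alpha\in\widehat{\mathcal{E}}_{\mathcal{C}_n}$ with $\mathrm{im}(\alpha)\subseteq A$. For $x\in\mathcal{C}_n$, $\overline{x}$ is the constant map with value $x$, and $\mathcal{E}^{(x)}_{\mathcal{C}_n}=\{\alpha\in\widehat{\mathcal{E}}_{\mathcal{C}_n}:\alpha(x)=x\}$. For $m\in\{0,\dots,k-1\}$ and $s\in\{0,\dots,n-1\}$, the $s$-th layer with respect to $\overline{a_m}$ is $\mathcal{L}^{s}_{a_m}=\{\alpha\in\sigma:\ |\{i\in\mathcal{C}_n:\alpha(i)=a_m\}|=s\}$. For an integer $t$ with $0\le t\le n$, the discrete neighborhood is $\mathcal{DN}^{\,t}_m=\{\overline{a_m}\}\cup\bigcup_{\ell=n-t}^{n-1}\mathcal{L}^{\ell}_{a_m}$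 (the union being empty when $t=0$). *)

From mathcomp Require Import all_boot all_order.
Set Implicit Arguments. Unset Strict Implicit. Unset Printing Implicit Defensive.

(* The chain C_n = {0,...,n-1} is 'I_n with its usual order. *)

Definition ope (n : nat) : {set {ffun 'I_n -> 'I_n}} :=
  [set f : {ffun 'I_n -> 'I_n} | [forall x : 'I_n, forall y : 'I_n, (x <= y)%N ==> (f x <= f y)%N]].

Definition simplex (n : nat) (A : {set 'I_n}) : {set {ffun 'I_n -> 'I_n}} :=
  [set f : {ffun 'I_n -> 'I_n} in ope n | [forall i : 'I_n, f i \in A]].

Definition constmap (n : nat) (x : 'I_n) : {ffun 'I_n -> 'I_n} := [ffun _ => x].

Definition Efix (n : nat) (x : 'I_n) : {set {ffun 'I_n -> 'I_n}} :=
  [set f : {ffun 'I_n -> 'I_n} in ope n | f x == x].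

Definition layer (n : nat) (sigma : {set {ffun 'I_n -> 'I_n}}) (b : 'I_n) (s : nat)
  : {set {ffun 'I_n -> 'I_n}} :=
  [set f : {ffun 'I_n -> 'I_n} in sigma | #|[set i : 'I_n | f i == b]| == s].

Definition DN (n : nat) (sigma : {set {ffun 'I_n -> 'I_n}}) (b : 'I_n) (t : nat)
  : {set {ffun 'I_n -> 'I_n}} :=
  constmap b |: \bigcup_(n - t <= l < n) layer sigma b l.

From mathcomp Require Import all_boot all_order.

(* For an order-preserving map f with b = min (im f), the fibre f^-1(b) is an
   initial segment of C_n, so f fixes b exactly when the fibre has more than b
   elements, i.e. when f lies in one of the layers counted by DN^(n-b-1).  Dually,
   for b = max (im f) the fibre is a final segment and f fixes b exactly when it
   has at least n - b elements.  The constant map is the single layer of size n. *)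

Lemma mem_bigcup_nat (T : finType) (x : T) (lo hi : nat) (F : nat -> {set T}) :
  (x \in \bigcup_(lo <= l < hi) F l) = has (fun l => x \in F l) (index_iota lo hi).
Proof. by rewrite (big_morph _ (in_setU x) (in_set0 x)) big_has. Qed.

Section Fibres.

Variable n : nat.
Implicit Types (S : {set 'I_n}) (f : {ffun 'I_n -> 'I_n}) (b : 'I_n).

Lemma card_prefix (c : nat) : c <= n -> #|[set i : 'I_n | i < c]| = c.
Proof.
move=> le_cn.
have -> : [set i : 'I_n | i < c] = widen_ord le_cn @: [set: 'I_c].
  apply/setP=> i; rewrite inE; apply/idP/imsetP => [lt_ic | [j _ ->]].
    by exists (Ordinal lt_ic) => //; apply: val_inj.
  by rewrite /= ltn_ord.
by rewrite card_imset ?cardsT ?card_ord // => i j [/val_inj].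
Qed.

Lemma mem_downset S :
  (forall i j : 'I_n, i <= j -> j \in S -> i \in S) ->
  forall b, (b \in S) = (b < #|S|).
Proof.
move=> downS b; apply/idP/idP => [Sb | lt_bS].
  rewrite -[b.+1]card_prefix ?ltn_ord //; apply: subset_leq_card.
  by apply/subsetP=> i; rewrite inE ltnS => le_ib; apply: downS Sb.
apply/negP=> notSb; suff : #|S| <= b by rewrite leqNgt lt_bS.
rewrite -[leqRHS](@card_prefix b (ltnW (ltn_ord b))); apply: subset_leq_card.
apply/subsetP=> i Si; rewrite inE ltnNge; apply/negP=> le_bi.
by rewrite (downS _ _ le_bi Si) in notSb.
Qed.

Lemma mem_upset S :
  (forall i j : 'I_n, i <= j -> i \in S -> j \in S) ->
  forall b, (b \in S) = (n - #|S| <= b).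
Proof.
move=> upS b; have downSC : forall i j : 'I_n, i <= j -> j \in ~: S -> i \in ~: S.
  by move=> i j le_ij; rewrite !inE; apply: contra; apply: upS.
rewrite -[b \in S]negbK -in_setC mem_downset // -leqNgt.
by rewrite -[n in n - _]card_ord -(cardsC S) addKn.
Qed.

Lemma ope_mono f : f \in ope n -> forall x y : 'I_n, x <= y -> f x <= f y.
Proof. by rewrite inE => /forallP mono x y; apply/implyP; move/forallP: (mono x). Qed.

Lemma fixes_min f b : f \in ope n -> (forall i, b <= f i) ->
  (f b == b) = (b < #|[set i | f i == b]|).
Proof.
move=> fo ge_fb; have -> : (f b == b) = (b \in [set i | f i == b]) by rewrite inE.
apply: mem_downset => i j le_ij; rewrite !inE => /eqP fj.
by rewrite -val_eqE eqn_leq ge_fb andbT -fj ope_mono.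
Qed.

Lemma fixes_max f b : f \in ope n -> (forall i, f i <= b) ->
  (f b == b) = (n - b <= #|[set i | f i == b]|).
Proof.
move=> fo le_fb; have -> : (f b == b) = (b \in [set i | f i == b]) by rewrite inE.
rewrite mem_upset => [|i j le_ij]; last first.
  by rewrite !inE => /eqP fi; rewrite -val_eqE eqn_leq le_fb -fi ope_mono.
by rewrite leq_subCl // -[n in _ <= n]card_ord max_card.
Qed.

Lemma card_fibre_eq_n f b :
  (#|[set i | f i == b]| == n) = (f == constmap b).
Proof.
apply/eqP/eqP => [fib_n | ->].
  have fibT : [set i | f i == b] = setT.
    by apply/eqP; rewrite eqEcard subsetT cardsT /= card_ord fib_n.
  apply/ffunP=> i; rewrite ffunE.
  have : i \in [set i | f i == b] by rewrite fibT inE.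
  by rewrite inE => /eqP.
by rewrite -[RHS]card_ord -cardsT; apply: eq_card => i; rewrite !inE ffunE eqxx.
Qed.

Lemma DN_card_fibre (sig : {set {ffun 'I_n -> 'I_n}}) b t :
  constmap b \in sig ->
  DN sig b t = [set f in sig | n - t <= #|[set i | f i == b]|].
Proof.
move=> sig_b; apply/setP=> f; rewrite /DN in_setU1 mem_bigcup_nat [in RHS]inE.
have le_fib_n : #|[set i | f i == b]| <= n by rewrite -[n in _ <= n]card_ord max_card.
apply/idP/idP.
  case/orP => [/eqP -> | /hasP [l]].
    have /eqP -> : #|[set i | constmap b i == b]| == n by rewrite card_fibre_eq_n.
    by rewrite sig_b leq_subr.
  by rewrite mem_index_iota inE => /andP [le_l _] /andP [-> /eqP ->].
case/andP => sig_f le_fib; case: (ltngtP #|[set i | f i == b]| n) => [lt_fib_n | | ].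
- apply/orP; right; apply/hasP; exists #|[set i | f i == b]|.
    by rewrite mem_index_iota le_fib.
  by rewrite inE sig_f eqxx.
- by rewrite ltnNge le_fib_n.
- by move/eqP; rewrite card_fibre_eq_n => ->.
Qed.

Variables (sig : {set {ffun 'I_n -> 'I_n}}) (b : 'I_n).
Hypotheses (sig_ope : {subset sig <= ope n}) (sig_b : constmap b \in sig).

Lemma DN_min_Efix : (forall f i, f \in sig -> b <= f i) ->
  DN sig b (n - b - 1) = sig :&: Efix b.
Proof.
move=> ge_b; rewrite DN_card_fibre // -subnDA addn1 subKn ?ltn_ord //.
apply/setP=> f; rewrite in_setI [in LHS]inE; have [sig_f | //] := boolP (f \in sig).
by rewrite inE (sig_ope _ sig_f) fixes_min ?(sig_ope _ sig_f) // => i; apply: ge_b.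
Qed.

Lemma DN_max_Efix : (forall f i, f \in sig -> f i <= b) ->
  DN sig b b = sig :&: Efix b.
Proof.
move=> le_b; rewrite DN_card_fibre //.
apply/setP=> f; rewrite in_setI [in LHS]inE; have [sig_f | //] := boolP (f \in sig).
by rewrite inE (sig_ope _ sig_f) fixes_max ?(sig_ope _ sig_f) // => i; apply: le_b.
Qed.

End Fibres.

Theorem theorem5 (n k' : nat) (a : 'I_k'.+1 -> 'I_n)
  (a_incr : forall i j : 'I_k'.+1, (i < j)%N -> (a i < a j)%N) :
  let A := [set a i | i : 'I_k'.+1] in
  let sigma := simplex A in
  DN sigma (a ord0) (n - a ord0 - 1) = sigma :&: Efix (a ord0) /\
  DN sigma (a ord_max) (a ord_max) = sigma :&: Efix (a ord_max).
Proof.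
move=> A sigma.
have a_mono (i j : 'I_k'.+1) : i <= j -> a i <= a j.
  rewrite leq_eqVlt => /orP [/eqP/val_inj -> // | /a_incr]; exact: ltnW.
have sigma_ope : {subset sigma <= ope n} by move=> f; rewrite inE => /andP [].
have sigma_im f i : f \in sigma -> exists j, f i = a j.
  by rewrite inE => /andP [_ /forallP /(_ i) /imsetP [j _ ->]]; exists j.
have sigma_const j : constmap (a j) \in sigma.
  rewrite !inE; apply/andP; split; last by apply/forallP=> i; rewrite ffunE imset_f.
  by apply/forallP=> x; apply/forallP=> y; rewrite !ffunE leqnn implybT.
split; [apply: DN_min_Efix | apply: DN_max_Efix] => // f i /(sigma_im _ i) [j ->].
  by apply: a_mono.
by apply: a_mono; rewrite -ltnS.
Qed.
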